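(* Let $A$ be a doubly nonnegative matrix whose largest eigenvalue $\lambda_1$ has multiplicity one, with corresponding eigenvector $x_1$. Then for any constant $r>0$, the matrix $B=A+r\,x_1x_1^T$ satisfies $B^t\ge A^t$ entry-wise for all $t\ge 0$.
   Context: A real matrix is doubly nonnegative if it is symmetric, positive semidefinite, and entry-wise nonnegative. For a positive semidefinite matrix $C=\sum_i\mu_iy_iy_i^T$ (orthonormal eigenvectors $y_i$, eigenvalues $\mu_i\ge0$) and $t>0$, $C^t=\sum_i\mu_i^ty_iy_i^T$, and $C^0=I$. *)

From HB Require Import structures.
From mathcomp Require Import all_boot all_order all_algebra.
From mathcomp Require Import reals exp.
Set Implicit Arguments. Unset Strict Implicit. Unset Printing Implicit Defensive.
Import Order.TTheory GRing.Theory Num.Theory.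
Local Open Scope ring_scope.

Definition psd (R : realType) (n : nat) (C : 'M[R]_n) : Prop :=
  C^T = C /\ forall x : 'cV[R]_n, 0 <= (x^T *m C *m x) 0 0.

Definition doubly_nonnegative (R : realType) (n : nat) (A : 'M[R]_n) : Prop :=
  psd A /\ forall i j, 0 <= A i j.

Definition psd_eigendecomp (R : realType) (n : nat) (C : 'M[R]_n)
    (Y : 'M[R]_n) (mu : 'I_n -> R) : Prop :=
  Y^T *m Y = 1%:M /\ (forall i, 0 <= mu i) /\
  C = \sum_(i < n) mu i *: (col i Y *m (col i Y)^T).

(* P = C^t : P = \sum_i mu_i^t y_i y_i^T for some orthonormal eigendecomposition
   of C (the paper's definition; powR 0 0 = 1, so C^0 = I). *)
Definition is_mpow (R : realType) (n : nat) (C : 'M[R]_n) (t : R)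
    (P : 'M[R]_n) : Prop :=
  exists (Y : 'M[R]_n) (mu : 'I_n -> R), psd_eigendecomp C Y mu /\
    P = \sum_(i < n) powR (mu i) t *: (col i Y *m (col i Y)^T).

From HB Require Import structures.
From mathcomp Require Import all_boot all_order all_algebra.
From mathcomp Require Import reals exp.
From mathcomp Require Import ring.
Set Implicit Arguments.
Unset Strict Implicit.
Unset Printing Implicit Defensive.
Import Order.TTheory GRing.Theory Num.Theory.
Local Open Scope ring_scope.

(* Write A = Y diag(mu) Y^T with Y orthogonal and let k index the simple top
   eigenvalue.  For any v, the Rayleigh quotient v^T A v / v^T v is a convex
   combination of the mu_i with weights (Y^T v)_i^2, so it reaches mu_k only
   when v is a multiple of the column y_k.  Since A is entrywise nonnegative,
   |y_k| has at least the Rayleigh quotient of y_k, hence |y_k| = +-y_k and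
   y_k y_k^T is entrywise nonnegative.  The eigenvector x_1 is a multiple of
   y_k, so B = Y diag(mu + s e_k) Y^T with s >= 0, and
   B^t - A^t = ((mu_k + s)^t - mu_k^t) y_k y_k^T >= 0. *)

Section RankOneSums.
Variables (R : comNzRingType) (n : nat).

Lemma sum_rank1E (Y : 'M[R]_n) (d : 'I_n -> R) :
  \sum_(i < n) d i *: (col i Y *m (col i Y)^T) = Y *m diag_mx (\row_i d i) *m Y^T.
Proof.
apply/matrixP => p q; rewrite summxE mul_mx_diag !mxE.
by apply: eq_bigr => i _; rewrite !mxE big_ord1 !mxE; ring.
Qed.

Lemma sum_rank1_mxE (Y : 'M[R]_n) (d : 'I_n -> R) p q :
  (\sum_(i < n) d i *: (col i Y *m (col i Y)^T)) p q =
  \sum_(i < n) d i * (Y p i * Y q i).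
Proof. by rewrite summxE; apply: eq_bigr => i _; rewrite !mxE big_ord1 !mxE. Qed.

Lemma diag_conj_add_rank1 (Y : 'M[R]_n) (d : 'I_n -> R) k s :
  Y *m diag_mx (\row_i d i) *m Y^T + s *: (col k Y *m (col k Y)^T) =
  Y *m diag_mx (\row_i (d i + s * (i == k)%:R)) *m Y^T.
Proof.
rewrite -!sum_rank1E; under [RHS]eq_bigr do rewrite scalerDl.
rewrite big_split /=; congr (_ + _).
rewrite (bigD1 k) //= eqxx mulr1 big1 ?addr0 // => i /negbTE ->.
by rewrite mulr0 scale0r.
Qed.

End RankOneSums.

Section OrthogonalConjugation.
Variables (F : fieldType) (n : nat) (Y : 'M[F]_n).
Hypothesis orthoY : Y^T *m Y = 1%:M.

Lemma char_poly_orthogonal_conj (D : 'M[F]_n) :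
  char_poly (Y *m D *m Y^T) = char_poly D.
Proof.
have YYT : map_mx (@polyC F) Y *m map_mx (@polyC F) Y^T = 1%:M.
  by rewrite -map_mxM mulmx1C // map_mx1.
rewrite /char_poly /char_poly_mx.
have -> : 'X%:M - map_mx polyC (Y *m D *m Y^T) =
   map_mx polyC Y *m ('X%:M - map_mx polyC D) *m map_mx polyC Y^T.
  rewrite mulmxBr mulmxBl !map_mxM mul_mx_scalar -scalemxAl -mul_scalar_mx.
  by rewrite YYT mulmx1.
by rewrite !det_mulmx mulrAC -det_mulmx YYT det1 mul1r.
Qed.

(* The functional calculus is well defined: two orthogonal diagonalisations of
   the same matrix give the same f(C), because the orthogonal matrix Y^T Z
   intertwining diag(d) and diag(e) also intertwines diag(f o d) and diag(f o e). *)
Lemma diag_conj_map_eq (Z : 'M[F]_n) (d e : 'I_n -> F) (f : F -> F) :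
  Z^T *m Z = 1%:M ->
  Y *m diag_mx (\row_i d i) *m Y^T = Z *m diag_mx (\row_i e i) *m Z^T ->
  Y *m diag_mx (\row_i f (d i)) *m Y^T = Z *m diag_mx (\row_i f (e i)) *m Z^T.
Proof.
move=> orthoZ YdZe; set M := Y^T *m Z.
have intertw_d : diag_mx (\row_i d i) *m M = M *m diag_mx (\row_i e i).
  have := congr1 (fun C => Y^T *m C *m Z) YdZe.
  rewrite /= !mulmxA orthoY mul1mx -!mulmxA orthoZ mulmx1 => ->.
  by rewrite /M !mulmxA.
have intertw_f : diag_mx (\row_i f (d i)) *m M = M *m diag_mx (\row_i f (e i)).
  apply/matrixP => i j; move: intertw_d; clearbody M.
  move/(congr1 (fun C : 'M_n => C i j)).
  rewrite /= !mul_diag_mx !mul_mx_diag !mxE.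
  have [-> _|Mij_neq0] := eqVneq (M i j) 0; first by rewrite !mulr0 !mul0r.
  by rewrite mulrC => /(mulfI Mij_neq0) ->; rewrite mulrC.
rewrite -[LHS]mulmx1 -(mulmx1C orthoZ) !mulmxA.
rewrite -(mulmxA (Y *m _) Y^T Z) -/M -(mulmxA Y) intertw_f.
by rewrite /M !mulmxA (mulmx1C orthoY) mul1mx.
Qed.

End OrthogonalConjugation.

Lemma mup_char_poly_diag (F : fieldType) n (d : 'I_n -> F) x :
  mup x (char_poly (diag_mx (\row_j d j))) = #|[pred j | d j == x]|.
Proof.
rewrite char_poly_trig ?diag_mx_is_trig //.
under eq_bigr do rewrite !mxE eqxx mulr1n.
rewrite -(big_map d xpredT (fun y => 'X - y%:P)) mu_prod_XsubC count_map.
rewrite cardE /enum_mem size_filter; apply: eq_count => j /=.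
by rewrite !inE eq_sym.
Qed.
Lemma quad_formE (R : comNzRingType) n (A : 'M[R]_n) (u : 'cV[R]_n) :
  (u^T *m A *m u) 0 0 = \sum_p \sum_q u p 0 * A p q * u q 0.
Proof.
rewrite mxE; under eq_bigr do rewrite mxE big_distrl.
by rewrite exchange_big; apply: eq_bigr => p _; apply: eq_bigr => q _; rewrite !mxE.
Qed.

Lemma quad_form_le_abs (R : realDomainType) n (A : 'M[R]_n) (u : 'cV[R]_n) :
  (forall p q, 0 <= A p q) ->
  (u^T *m A *m u) 0 0 <= ((map_mx Num.norm u)^T *m A *m map_mx Num.norm u) 0 0.
Proof.
move=> A_ge0; rewrite !quad_formE; apply: ler_sum => p _; apply: ler_sum => q _.
by rewrite !mxE (le_trans (ler_norm _)) // !normrM (ger0_norm (A_ge0 p q)).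
Qed.

Section RayleighQuotient.
Variables (R : realFieldType) (n : nat) (A Y : 'M[R]_n) (mu : 'I_n -> R).
Hypotheses (orthoY : Y^T *m Y = 1%:M) (defA : A = Y *m diag_mx (\row_i mu i) *m Y^T).

Lemma eigenvalue_diag_conj i : eigenvalue A (mu i).
Proof.
apply/eigenvalueP; exists (row i Y^T).
  have row_diag : row i (1%:M : 'M[R]_n) *m diag_mx (\row_j mu j) = mu i *: row i 1%:M.
    apply/matrixP => a b; rewrite -row_mul mul1mx !mxE.
    by case: eqP => [->|]; rewrite ?mulr1n ?mulr0n ?mulr0 ?mulr1.
  by rewrite defA !mulmxA -row_mul orthoY row_diag -scalemxAl -row_mul mul1mx.
apply/eqP => /(congr1 (mulmx^~ Y)); rewrite -row_mul orthoY mul0mx.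
by move/matrixP/(_ 0 i); rewrite !mxE eqxx => /eqP; rewrite oner_eq0.
Qed.

Lemma orthogonal_coordK (v : 'cV[R]_n) : Y *m (Y^T *m v) = v.
Proof. by rewrite mulmxA mulmx1C // mul1mx. Qed.

Lemma quad_form_diag_conj (v : 'cV[R]_n) :
  (v^T *m A *m v) 0 0 = \sum_i mu i * (Y^T *m v) i 0 ^+ 2.
Proof.
have -> : v^T *m A *m v = (Y^T *m v)^T *m diag_mx (\row_i mu i) *m (Y^T *m v).
  by rewrite defA trmx_mul trmxK !mulmxA.
by rewrite mxE; apply: eq_bigr => i _; rewrite mul_mx_diag !mxE expr2 mulrA [_ * mu i]mulrC.
Qed.

Lemma sqnorm_orthogonal_coord (v : 'cV[R]_n) :
  (v^T *m v) 0 0 = \sum_i (Y^T *m v) i 0 ^+ 2.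
Proof.
rewrite -{1 2}(orthogonal_coordK v) trmx_mul -(mulmxA _ Y^T) (mulmxA Y^T) orthoY.
by rewrite mul1mx mxE; apply: eq_bigr => i _; rewrite !mxE expr2.
Qed.

Variable k : 'I_n.
Hypotheses (mu_max : forall i, mu i <= mu k) (mu_simple : forall i, mu i = mu k -> i = k).

Lemma rayleigh_top_coord_eq0 (v : 'cV[R]_n) :
  mu k * (v^T *m v) 0 0 <= (v^T *m A *m v) 0 0 ->
  forall i, i != k -> (Y^T *m v) i 0 = 0.
Proof.
move=> top_v i i_neq_k.
have term_ge0 j : 0 <= (mu k - mu j) * (Y^T *m v) j 0 ^+ 2.
  by rewrite mulr_ge0 ?sqr_ge0 ?subr_ge0.
have sum_eq0 : \sum_j (mu k - mu j) * (Y^T *m v) j 0 ^+ 2 = 0.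
  apply/eqP; rewrite eq_le sumr_ge0 // andbT.
  under eq_bigr do rewrite mulrBl.
  by rewrite sumrB -mulr_sumr -sqnorm_orthogonal_coord -quad_form_diag_conj subr_le0.
move: (psumr_eq0P (fun j _ => term_ge0 j) sum_eq0 (i := i) isT) => /eqP.
rewrite mulf_eq0 sqrf_eq0 subr_eq0 => /orP[/eqP/esym/mu_simple i_eq_k|/eqP //].
by rewrite i_eq_k eqxx in i_neq_k.
Qed.

Lemma rayleigh_top_col (v : 'cV[R]_n) :
  mu k * (v^T *m v) 0 0 <= (v^T *m A *m v) 0 0 -> v = (Y^T *m v) k 0 *: col k Y.
Proof.
move=> top_v; apply/matrixP => p j; rewrite (ord1 j).
rewrite -{1}(orthogonal_coordK v) !mxE (bigD1 k) //= big1 ?addr0 => [|i i_neq_k].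
  by rewrite [X in _ * X]mxE mulrC.
by rewrite (rayleigh_top_coord_eq0 top_v) // mulr0.
Qed.

Lemma top_col_mul_ge0 : (forall p q, 0 <= A p q) -> forall p q, 0 <= Y p k * Y q k.
Proof.
move=> A_ge0 p q; set y := col k Y; set v := map_mx Num.norm y.
have Yy : Y^T *m y = col k 1%:M by rewrite /y !colE mulmxA orthoY.
have y_sqnorm : (y^T *m y) 0 0 = 1.
  rewrite sqnorm_orthogonal_coord Yy (bigD1 k) //= big1 ?addr0 => [|i i_neq_k].
    by rewrite !mxE eqxx expr1n.
  by rewrite !mxE (negbTE i_neq_k) expr0n.
have y_quad : (y^T *m A *m y) 0 0 = mu k.
  rewrite quad_form_diag_conj Yy (bigD1 k) //= big1 ?addr0 => [|i i_neq_k].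
    by rewrite !mxE eqxx expr1n mulr1.
  by rewrite !mxE (negbTE i_neq_k) expr0n mulr0.
have v_sqnorm : (v^T *m v) 0 0 = 1.
  rewrite -y_sqnorm !mxE; apply: eq_bigr => i _.
  by rewrite !mxE -normrM ger0_norm // -expr2 sqr_ge0.
have [w defv] : exists w, v = w *: y.
  exists ((Y^T *m v) k 0); apply: rayleigh_top_col.
  by rewrite v_sqnorm mulr1 -y_quad quad_form_le_abs.
have w_sqr : w ^+ 2 = 1.
  move: v_sqnorm; rewrite defv [(w *: y)^T]linearZ /= -scalemxAl -scalemxAr !scalerA mxE.
  by rewrite y_sqnorm mulr1 expr2.
have : 0 <= v p 0 * v q 0 by rewrite !mxE mulr_ge0.
by rewrite defv !mxE mulrACA -expr2 w_sqr mul1r.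
Qed.

End RayleighQuotient.

Lemma is_mpow_diag_conj (R : realType) n (C Y : 'M[R]_n) (d : 'I_n -> R) t P :
  Y^T *m Y = 1%:M -> C = Y *m diag_mx (\row_i d i) *m Y^T -> is_mpow C t P ->
  P = Y *m diag_mx (\row_i d i `^ t) *m Y^T.
Proof.
move=> orthoY defC [Z [e [[orthoZ [_ defC']] ->]]].
rewrite sum_rank1E in defC'; rewrite sum_rank1E.
symmetry; apply: (diag_conj_map_eq orthoY (fun x => x `^ t) orthoZ).
by rewrite -defC -defC'.
Qed.

Theorem theorem5p2 (R : realType) (n : nat) (A : 'M[R]_n)
    (lambda1 : R) (x1 : 'cV[R]_n) (r : R) :
  doubly_nonnegative A ->
  (* lambda1 is an eigenvalue of A, of (algebraic) multiplicity one *)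
  mup lambda1 (char_poly A) = 1%N ->
  (* lambda1 is the largest eigenvalue *)
  (forall mu : R, eigenvalue A mu -> mu <= lambda1) ->
  (* x1 is a corresponding eigenvector *)
  x1 != 0 -> A *m x1 = lambda1 *: x1 ->
  0 < r ->
  forall (t : R), 0 <= t ->
  forall (Bt At : 'M[R]_n),
    is_mpow (A + r *: (x1 *m x1^T)) t Bt -> is_mpow A t At ->
    forall i j, At i j <= Bt i j.
Proof.
move=> [_ A_ge0] mup1 lambda1_max _ Ax1 r_gt0 t t_ge0 Bt At Bt_pow.
move=> [Y [mu [[orthoY [mu_ge0 defA]] ->]]] p q.
rewrite sum_rank1E in defA.
have [k mu_eq_lambda1] : {k | [pred i | mu i == lambda1] =i pred1 k}.
  apply: mem_card1.
  by rewrite -mup_char_poly_diag -(char_poly_orthogonal_conj orthoY) -defA.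
have muk : mu k = lambda1 by have := mu_eq_lambda1 k; rewrite !inE eqxx => /eqP.
have mu_simple i : mu i = mu k -> i = k.
  by rewrite muk => /eqP; have := mu_eq_lambda1 i; rewrite !inE => -> /eqP.
have mu_max i : mu i <= mu k.
  by rewrite muk; apply/lambda1_max/(eigenvalue_diag_conj orthoY defA).
set c := (Y^T *m x1) k 0.
have x1E : x1 = c *: col k Y.
  apply: (rayleigh_top_col orthoY defA mu_max mu_simple).
  by rewrite muk -mulmxA Ax1 -scalemxAr [in X in _ <= X]mxE.
have defB : A + r *: (x1 *m x1^T) =
    Y *m diag_mx (\row_i (mu i + r * c ^+ 2 * (i == k)%:R)) *m Y^T.
  rewrite defA -diag_conj_add_rank1 x1E linearZ /= -scalemxAl -scalemxAr.
  by rewrite !scalerA expr2 mulrA.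
rewrite (is_mpow_diag_conj orthoY defB Bt_pow) -sum_rank1E !sum_rank1_mxE.
apply: ler_sum => i _; have [->|_] := eqVneq i k; last first.
  by rewrite mulr0 addr0.
rewrite mulr1; apply: ler_wpM2r.
  exact: (top_col_mul_ge0 orthoY defA mu_max mu_simple).
have s_ge0 : 0 <= r * c ^+ 2 by rewrite mulr_ge0 ?sqr_ge0 ?ltW.
by apply: ge0_ler_powR; rewrite ?nnegrE ?addr_ge0 ?mu_ge0 ?lerDl.
Qed.
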